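(* Let $n_1,n_2$ be distinct odd primes with $\gcd(n_1-1,n_2-1)=6$, $n=n_1n_2$, and let $D_0,\dots,D_5$ be the Whiteman generalized cyclotomic classes of order 6 modulo $n$ (see context). Let $q$ be a power of a prime $p$ with $\gcd(q,n)=1$, and let $\beta$ be a primitive $n$-th root of unity in an extension of $\mathrm{GF}(q)$. Let $N_1=\{n_1,\dots,(n_2-1)n_1\}$, $N_2=\{n_2,\dots,(n_1-1)n_2\}$, and $S(x)=\sum_{i\in N_1\cup D_0\cup D_1\cup D_2}x^i$, $T(x)=\sum_{i\in N_1\cup D_1\cup D_2\cup D_3}x^i$, $M(x)=\sum_{i\in N_1\cup D_2\cup D_3\cup D_4}x^i$ in $\mathrm{GF}(q)[x]$. Then for $a\in\mathbb{Z}_n$: (1) $S(\beta^a)=T(\beta^a)=M(\beta^a)=-\frac{n_1+1}{2}\bmod p$ if $a\in N_1$, and $=\frac{n_2-1}{2}\bmod p$ if $a\in N_2$; (2) $S(\beta^a)$ equals $S(\beta),\ T(\beta),\ M(\beta),\ -(S(\beta)+1),\ -(T(\beta)+1),\ -(M(\beta)+1)$ according as $a\in D_0,D_1,D_2,D_3,D_4,D_5$ respectively; (3) $T(\beta^a)$ equals $T(\beta),\ M(\beta),\ -(S(\beta)+1),\ -(T(\beta)+1),\ -(M(\beta)+1),\ S(\beta)$ according as $a\in D_0,D_1,D_2,D_3,D_4,D_5$ respectively; (4) $M(\beta^a)$ equals $M(\beta),\ -(S(\beta)+1),\ -(T(\beta)+1),\ -(M(\beta)+1),\ S(\beta),\ T(\beta)$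 according as $a\in D_0,D_1,D_2,D_3,D_4,D_5$ respectively.
   Context: Let $e=(n_1-1)(n_2-1)/6$, $g$ a common primitive root of $n_1$ and $n_2$, $u$ an integer with $u\equiv g\pmod{n_1}$, $u\equiv 1\pmod{n_2}$, and $D_i=\{g^su^i\bmod n: s=0,\dots,e-1\}$ for $i=0,\dots,5$; these partition $\mathbb{Z}_n^*$. An integer ''mod $p$'' denotes its image in the prime field $\mathrm{GF}(p)$. *)

From HB Require Import structures.
From mathcomp Require Import all_boot all_order all_algebra fieldext.
Set Implicit Arguments. Unset Strict Implicit. Unset Printing Implicit Defensive.
Import GRing.Theory.
Local Open Scope ring_scope.

Definition prim_root_mod (m g : nat) : bool :=
  [&& coprime g m, (g ^ totient m == 1 %[mod m])%N &
      [forall k : 'I_(totient m), (0 < k)%N ==> (g ^ k != 1 %[mod m])%N]].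

Definition wh_e (n1 n2 : nat) : nat := ((n1 - 1) * (n2 - 1) %/ 6)%N.

Definition whD (n1 n2 g u i : nat) : seq nat :=
  [seq (g ^ s * u ^ i %% (n1 * n2))%N | s <- iota 0 (wh_e n1 n2)].

Definition whN1 (n1 n2 : nat) : seq nat := [seq (k * n1)%N | k <- iota 1 (n2 - 1)].
Definition whN2 (n1 n2 : nat) : seq nat := [seq (k * n2)%N | k <- iota 1 (n1 - 1)].

Definition setpoly (K : nzRingType) (n : nat) (A : pred nat) : {poly K} :=
  \sum_(i < n | A i) 'X^i.

Definition S_poly (K : nzRingType) (n1 n2 g u : nat) : {poly K} :=
  setpoly K (n1 * n2) (fun i => [|| i \in whN1 n1 n2, i \in whD n1 n2 g u 0,
                                    i \in whD n1 n2 g u 1 | i \in whD n1 n2 g u 2]).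
Definition T_poly (K : nzRingType) (n1 n2 g u : nat) : {poly K} :=
  setpoly K (n1 * n2) (fun i => [|| i \in whN1 n1 n2, i \in whD n1 n2 g u 1,
                                    i \in whD n1 n2 g u 2 | i \in whD n1 n2 g u 3]).
Definition M_poly (K : nzRingType) (n1 n2 g u : nat) : {poly K} :=
  setpoly K (n1 * n2) (fun i => [|| i \in whN1 n1 n2, i \in whD n1 n2 g u 2,
                                    i \in whD n1 n2 g u 3 | i \in whD n1 n2 g u 4]).

Definition evalL (K : fieldType) (L : fieldExtType K) (P : {poly K}) (x : L) : L :=
  (map_poly (in_alg L) P).[x].

From HB Require Import structures.
From mathcomp Require Import all_boot all_order all_algebra fieldext.
From mathcomp Require Import zify ring.
Import GRing.Theory.

Set Implicit Arguments.
Unset Strict Implicit.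
Unset Printing Implicit Defensive.

(* Write eta_m = sum_{y in D_m} beta^y for the Gaussian periods of the Whiteman
   classes.  In the CRT coordinates beta^y = zeta1^(y mod n1) zeta2^(y mod n2) the class
   D_m is {(g^(s+m), g^s) : s < e}, so eta_(m+6) = eta_m, and since D_0, ..., D_5
   partition Z_n^* the six periods add up to the product of the two orbit sums
   sum_r zeta_i^(g^r) = -1, i.e. to 1.  For a in D_k, multiplying the exponents by a
   turns the sum over D_j into eta_(j+k) and the sum over N1 into a geometric sum -1, so
   S, T, M at beta^a are the windows W_m = -1 + eta_m + eta_(m+1) + eta_(m+2) for
   m = k, k+1, k+2; the table follows from W_(m+3) = -(W_m + 1) and W_(m+6) = W_m.
   On N1 (resp. N2) every period collapses to -(n1-1)/6 (resp. -(n2-1)/6). *)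

Section PrimitiveRootMod.
Variables (p g : nat).
Hypotheses (p_pr : prime p) (g_prim : prim_root_mod p g).

Lemma prim_root_coprime : coprime g p.
Proof. by case/and3P: g_prim. Qed.

Lemma prim_root_gt0 : 0 < g.
Proof.
have := prim_root_coprime; case: g => //; rewrite /coprime gcd0n => /eqP p1.
by have := p_pr; rewrite p1.
Qed.

Lemma prim_root_expn_mod_neq0 r : g ^ r %% p != 0.
Proof.
apply: contraTneq (prime_gt1 p_pr) => /eqP dvd_p_gr.
have := coprimeXl r prim_root_coprime; rewrite /coprime (gcdn_idPr dvd_p_gr).
by move/eqP->.
Qed.

Lemma prim_root_expn_mod r : g ^ r = g ^ (r %% p.-1) %[mod p].
Proof.
have fermat : g ^ p.-1 = 1 %[mod p].
  by case/and3P: g_prim => _ /eqP; rewrite totient_prime.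
rewrite {1}(divn_eq r p.-1) expnD [_ * p.-1]mulnC expnM.
by rewrite -modnMml -modnXm fermat modnXm exp1n modnMml mul1n.
Qed.

Lemma prim_root_expn_eq1 k : g ^ k = 1 %[mod p] -> p.-1 %| k.
Proof.
move=> gk1; have p1_gt0 : 0 < p.-1 by have := prime_gt1 p_pr; lia.
case/and3P: g_prim => _ _ /forallP minimal.
have lt_k : k %% p.-1 < totient p by rewrite totient_prime // ltn_pmod.
have := minimal (Ordinal lt_k).
by rewrite /= -(prim_root_expn_mod k) gk1 eqxx implybF -eqn0Ngt.
Qed.

Lemma prim_root_expn_inj i j : g ^ i = g ^ j %[mod p] -> i = j %[mod p.-1].
Proof.
wlog le_ij : i j / i <= j.
  by move=> W; case: (leqP i j) => [/W//|/ltnW/W sym] /esym/sym.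
move=> gij; apply/esym/eqP; rewrite eqn_mod_dvd //; apply: prim_root_expn_eq1.
have gi_gt0 : 0 < g ^ i by rewrite expn_gt0 prim_root_gt0.
have cop_gi : coprime p (g ^ i) by rewrite coprime_sym coprimeXl ?prim_root_coprime.
apply/eqP; rewrite eqn_mod_dvd ?expn_gt0 ?prim_root_gt0 //.
rewrite -(Gauss_dvdr _ cop_gi) mulnBr muln1 -expnD subnKC //.
by rewrite -eqn_mod_dvd ?gij // leq_pexp2l // prim_root_gt0.
Qed.

End PrimitiveRootMod.

Record whiteman_params (n1 n2 g u : nat) : Prop := WhitemanParams {
  wh_prime1 : prime n1;
  wh_prime2 : prime n2;
  wh_neq : n1 != n2;
  wh_gcd : gcdn (n1 - 1) (n2 - 1) = 6;
  wh_prim_root1 : prim_root_mod n1 g;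
  wh_prim_root2 : prim_root_mod n2 g;
  wh_u_mod1 : u = g %[mod n1];
  wh_u_mod2 : u = 1 %[mod n2] }.

Section WhitemanClasses.
Variables (n1 n2 g u : nat).
Hypothesis W : whiteman_params n1 n2 g u.

Let n1_pr := wh_prime1 W.
Let n2_pr := wh_prime2 W.
Let g1 := wh_prim_root1 W.
Let g2 := wh_prim_root2 W.
Let f1 := (n1 - 1) %/ 6.
Let f2 := (n2 - 1) %/ 6.
Let e := wh_e n1 n2.
Let D := whD n1 n2 g u.

Lemma n1_pred_eq : n1.-1 = 6 * f1.
Proof. by rewrite -subn1 mulnC divnK // -(wh_gcd W) dvdn_gcdl. Qed.

Lemma n2_pred_eq : n2.-1 = 6 * f2.
Proof. by rewrite -subn1 mulnC divnK // -(wh_gcd W) dvdn_gcdr. Qed.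

Lemma f1_gt0 : 0 < f1.
Proof. by have := prime_gt1 n1_pr; have := n1_pred_eq; lia. Qed.

Lemma f2_gt0 : 0 < f2.
Proof. by have := prime_gt1 n2_pr; have := n2_pred_eq; lia. Qed.

Lemma coprime_n1n2 : coprime n1 n2.
Proof. by rewrite prime_coprime // dvdn_prime2 // (wh_neq W). Qed.

Lemma whe_eq_f1 : e = f1 * n2.-1.
Proof. by rewrite /e /wh_e !subn1 n1_pred_eq n2_pred_eq -mulnA mulKn. Qed.

Lemma whe_lcm : e = lcmn n1.-1 n2.-1.
Proof.
apply/eqP; rewrite -(eqn_pmul2r (_ : 0 < gcdn n1.-1 n2.-1)); last first.
  by rewrite -!subn1 (wh_gcd W).
by rewrite muln_lcm_gcd -!subn1 (wh_gcd W) /e /wh_e divnK // -(wh_gcd W) dvdn_mulr ?dvdn_gcdl.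
Qed.

Lemma eqn_mod_whe s t : s = t %[mod n1.-1] -> s = t %[mod n2.-1] -> s = t %[mod e].
Proof.
wlog le_ts : s t / t <= s.
  move=> sym; case: (leqP t s) => [/sym//|/ltnW/sym ts] st1 st2.
  by apply/esym/ts; apply/esym.
move=> /eqP st1 /eqP st2; apply/eqP; move: st1 st2.
by rewrite whe_lcm !eqn_mod_dvd // dvdn_lcm => -> ->.
Qed.

Lemma wh_index_inj s t m m' : s < e -> t < e -> m < 6 -> m' < 6 ->
  s + m = t + m' %[mod n1.-1] -> s = t %[mod n2.-1] -> s = t /\ m = m'.
Proof.
move=> se te m6 m'6 st1 st2.
have mod6 x y k : x = y %[mod 6 * k] -> x = y %[mod 6].
  by move=> xy; rewrite -(modn_dvdm x (dvdn_mulr k (dvdnn 6))) xy modn_dvdm ?dvdn_mulr.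
have eq_m : m = m'.
  have st1_6 : s + m = t + m' %[mod 6] by apply: (mod6 _ _ f1); rewrite -n1_pred_eq.
  have st2_6 : s = t %[mod 6] by apply: (mod6 _ _ f2); rewrite -n2_pred_eq.
  move: st1_6; rewrite -modnDml st2_6 modnDml => /eqP.
  by rewrite eqn_modDl !modn_small // => /eqP.
subst m'; split=> //; have st1' : s = t %[mod n1.-1].
  by apply/eqP; rewrite -(eqn_modDr m); apply/eqP.
by have := eqn_mod_whe st1' st2; rewrite !modn_small.
Qed.

Lemma coprime_f1f2 : coprime f1 f2.
Proof.
have := wh_gcd W; rewrite !subn1 n1_pred_eq n2_pred_eq -muln_gcdr /coprime.
by move=> gcd_eq; apply/eqP; lia.
Qed.

Lemma whe_eq_f2 : e = f2 * n1.-1.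
Proof. by rewrite whe_eq_f1 n1_pred_eq n2_pred_eq; lia. Qed.

Lemma whD_mod1 s m : g ^ s * u ^ m %% (n1 * n2) = g ^ (s + m) %[mod n1].
Proof.
rewrite modn_dvdm ?dvdn_mulr // -modnMmr -modnXm (wh_u_mod1 W).
by rewrite modnXm modnMmr expnD.
Qed.

Lemma whD_mod2 s m : g ^ s * u ^ m %% (n1 * n2) = g ^ s %[mod n2].
Proof.
rewrite modn_dvdm ?dvdn_mull // -modnMmr -modnXm (wh_u_mod2 W).
by rewrite modnXm exp1n modnMmr muln1.
Qed.

Lemma memD x m : x \in D m -> exists2 s, s < e & x = g ^ s * u ^ m %% (n1 * n2).
Proof. by case/mapP => s; rewrite mem_iota => /andP[_ ?] ->; exists s. Qed.

Lemma whD_elem_inj s t m m' : s < e -> t < e -> m < 6 -> m' < 6 ->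
  g ^ s * u ^ m %% (n1 * n2) = g ^ t * u ^ m' %% (n1 * n2) -> s = t /\ m = m'.
Proof.
move=> se te m6 m'6 st; apply: wh_index_inj => //.
  by apply: (prim_root_expn_inj n1_pr g1); rewrite -!whD_mod1 st.
by apply: (prim_root_expn_inj n2_pr g2); rewrite -(whD_mod2 s m) -(whD_mod2 t m') st.
Qed.

Lemma uniq_whD m : m < 6 -> uniq (D m).
Proof.
move=> m6; rewrite map_inj_in_uniq ?iota_uniq // => s t.
rewrite !mem_iota => /andP[_ se] /andP[_ te] /whD_elem_inj.
by case/(_ se te m6 m6).
Qed.

Lemma whD_disjoint x m m' : m < 6 -> m' < 6 -> x \in D m -> x \in D m' -> m = m'.
Proof.
move=> m6 m'6 /memD[s se ->] /memD[t te /whD_elem_inj].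
by case/(_ se te m6 m'6).
Qed.

Lemma whD_lt x m : x \in D m -> x < n1 * n2.
Proof. by case/memD=> s _ ->; rewrite ltn_pmod // muln_gt0 !prime_gt0. Qed.

Lemma whN1_lt x : x \in whN1 n1 n2 -> x < n1 * n2.
Proof.
case/mapP => k; rewrite mem_iota => /andP[k_gt0 k_lt] ->.
by have := prime_gt1 n1_pr; have := prime_gt1 n2_pr; move: k_lt; nia.
Qed.

Lemma whN1_notin_whD x m : x \in D m -> x \notin whN1 n1 n2.
Proof.
case/memD=> s _ ->; apply: contraTN (prim_root_expn_mod_neq0 n1_pr g1 (s + m)).
by case/mapP=> k _ /(congr1 (modn^~ n1)); rewrite whD_mod1 modnMl => ->.
Qed.

Lemma uniq_whN1 : uniq (whN1 n1 n2).
Proof.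
rewrite map_inj_in_uniq ?iota_uniq // => x y _ _ /eqP.
by rewrite eqn_pmul2r ?prime_gt0 // => /eqP.
Qed.

Lemma uniq_window j : j < 4 -> uniq (whN1 n1 n2 ++ D j ++ D j.+1 ++ D j.+2).
Proof.
move=> j4; rewrite !cat_uniq uniq_whN1 !uniq_whD; try lia.
have notN1 m x : x \in D m -> (x \in whN1 n1 n2) = false.
  by move/whN1_notin_whD/negPf.
have notD m m' x : m < 6 -> m' < 6 -> m != m' -> x \in D m -> (x \in D m') = false.
  by move=> m6 m'6 /eqP neq xm; apply/negP => /(whD_disjoint m6 m'6 xm).
rewrite !has_cat !negb_or /=; repeat (apply/andP; split) => //; apply/hasPn => x;
  by [move/notN1 => -> | move/notD => -> //; lia].
Qed.

End WhitemanClasses.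

Local Open Scope ring_scope.

Section PeriodicSums.
Variable R : nmodType.
Implicit Types (F : nat -> R) (c d : nat).

Lemma big_ord_shift_periodic F d t : (forall i, F (i + d)%N = F i) ->
  \sum_(s < d) F (s + t)%N = \sum_(s < d) F s.
Proof.
move=> F_per; elim: t => [|t IH]; first by apply: eq_bigr => s _; rewrite addn0.
case: d F_per IH => [|d] F_per IH; first by rewrite !big_ord0.
rewrite -IH big_ord_recr /= [in RHS]big_ord_recl /= addrC; congr (_ + _).
  by rewrite add0n -(F_per t) addnC addnS.
by apply: eq_bigr => s _; rewrite /bump /= add1n addnS addSn.
Qed.

Lemma big_ord_mul_blocks F c d :
  \sum_(i < c * d) F i = \sum_(w < c) \sum_(t < d) F (w * d + t)%N.
Proof.
elim: c => [|c IH]; first by rewrite mul0n !big_ord0.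
by rewrite big_ord_recr /= -IH mulSn addnC big_split_ord.
Qed.

Lemma big_ord_mul_periodic F c d : (forall i, F (i + d)%N = F i) ->
  \sum_(i < c * d) F i = (\sum_(t < d) F t) *+ c.
Proof.
move=> F_per; rewrite big_ord_mul_blocks -[c in RHS]card_ord -sumr_const.
apply: eq_bigr => w _; apply: eq_bigr => t _.
by elim: (nat_of_ord w) => // k IH; rewrite mulSn -addnA addnC F_per.
Qed.

Lemma big_iota1 F m : \sum_(k <- iota 1 m) F k = \sum_(i < m) F i.+1.
Proof. by rewrite (iotaDl 1 0) big_map -[m in iota 0 m]subn0 big_mkord. Qed.

Lemma big_ord_mem_uniq n (s : seq nat) F : uniq s -> {subset s <= gtn n} ->
  \sum_(i < n | (i : nat) \in s) F i = \sum_(i <- s) F i.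
Proof.
move=> s_uniq s_lt; rewrite -(big_mkord (fun i => i \in s)) -big_filter.
apply/perm_big/uniq_perm; rewrite ?filter_uniq ?iota_uniq // => y.
rewrite mem_filter mem_iota add0n subn0; case ys: (y \in s) => //=.
exact: s_lt.
Qed.

End PeriodicSums.

Section RootSums.
Variable R : fieldType.
Implicit Types z : R.

Lemma sum_expr_root1 z m : z ^+ m = 1 -> z != 1 -> \sum_(i < m) z ^+ i = 0.
Proof.
move=> zm z_neq1; have := subrX1 z m; rewrite zm subrr => /esym/eqP.
by rewrite mulf_eq0 subr_eq0 (negPf z_neq1) => /eqP.
Qed.

Lemma sum_expr_root1_nonzero_exps z m : (0 < m)%N -> z ^+ m = 1 -> z != 1 ->
  \sum_(i < m.-1) z ^+ i.+1 = -1.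
Proof.
move=> m_gt0 zm z_neq1; have := sum_expr_root1 zm z_neq1.
by rewrite -(prednK m_gt0) big_ord_recl /= expr0 => /eqP; rewrite addrC addr_eq0 => /eqP.
Qed.

Section PrimRootOrbit.
Variables (p g : nat).
Hypotheses (p_pr : prime p) (g_prim : prim_root_mod p g).

Lemma sum_expr_prim_root_orbit z : z ^+ p = 1 -> z != 1 ->
  \sum_(r < p.-1) z ^+ (g ^ r)%N = -1.
Proof.
move=> zp z_neq1; have p_gt0 := prime_gt0 p_pr.
have h_lt (r : 'I_p.-1) : ((g ^ r %% p).-1 < p.-1)%N.
  by have := ltn_pmod (g ^ r) p_gt0; have := prim_root_expn_mod_neq0 p_pr g_prim r; lia.
pose h r := Ordinal (h_lt r).
have h_inj : injective h.
  move=> r s /(congr1 val) /= eq_rs; apply/val_inj.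
  have : g ^ r = g ^ s %[mod p].
    by have := prim_root_expn_mod_neq0 p_pr g_prim r;
       have := prim_root_expn_mod_neq0 p_pr g_prim s; lia.
  by move/(prim_root_expn_inj p_pr g_prim); rewrite !modn_small.
rewrite -(sum_expr_root1_nonzero_exps p_gt0 zp z_neq1) [RHS](reindex_inj h_inj) /=.
apply: eq_bigr => r _ /=; rewrite -(expr_mod _ zp) prednK //.
by rewrite lt0n prim_root_expn_mod_neq0.
Qed.

Lemma sum_expr_prim_root_orbit_shift z c j : z ^+ p = 1 -> z != 1 ->
  \sum_(s < c * p.-1) z ^+ (g ^ (s + j))%N = - c%:R.
Proof.
move=> zp z_neq1; pose F s := z ^+ (g ^ s)%N.
have F_per i : F (i + p.-1)%N = F i.
  by rewrite /F -(expr_mod _ zp) -[in RHS](expr_mod _ zp) prim_root_expn_mod // modnDr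
    -prim_root_expn_mod.
rewrite (big_ord_mul_periodic (F := fun s => F (s + j)%N)); last first.
  by move=> i; rewrite addnAC F_per.
by rewrite big_ord_shift_periodic // sum_expr_prim_root_orbit // mulNrn.
Qed.

End PrimRootOrbit.
End RootSums.

Section WhitemanPeriods.
Variables (n1 n2 g u : nat) (R : fieldType) (beta : R).
Hypotheses (W : whiteman_params n1 n2 g u) (beta_prim : (n1 * n2).-primitive_root beta).

Let n1_pr := wh_prime1 W.
Let n2_pr := wh_prime2 W.
Let g1 := wh_prim_root1 W.
Let g2 := wh_prim_root2 W.
Let e := wh_e n1 n2.
Let zeta1 := beta ^+ chinese n1 n2 1 0.
Let zeta2 := beta ^+ chinese n1 n2 0 1.
Let rho1 r := zeta1 ^+ (g ^ r)%N.
Let rho2 r := zeta2 ^+ (g ^ r)%N.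

Lemma expr_beta_mod x y : (x = y %[mod n1 * n2])%N -> beta ^+ x = beta ^+ y.
Proof.
by have bn := prim_expr_order beta_prim; move=> xy; rewrite -(expr_mod x bn) xy expr_mod.
Qed.

Lemma zeta1_expr_eq1 x : (zeta1 ^+ x == 1) = (n1 %| x)%N.
Proof.
have cop := coprime_n1n2 W.
rewrite -exprM -(prim_order_dvd beta_prim) Gauss_dvd // [(n2 %| _)%N]dvdn_mulr ?andbT.
  by rewrite Gauss_dvdr // -coprime_modr chinese_modl // coprime_modr coprimen1.
by apply/eqP; rewrite chinese_modr // mod0n.
Qed.

Lemma zeta2_expr_eq1 x : (zeta2 ^+ x == 1) = (n2 %| x)%N.
Proof.
have cop := coprime_n1n2 W.
rewrite -exprM -(prim_order_dvd beta_prim) Gauss_dvd // [(n1 %| _)%N]dvdn_mulr //.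
  by rewrite Gauss_dvdr // -coprime_modr chinese_modr // coprime_modr coprimen1.
by apply/eqP; rewrite chinese_modl // mod0n.
Qed.

Lemma zeta1_order : zeta1 ^+ n1 = 1. Proof. by apply/eqP; rewrite zeta1_expr_eq1. Qed.
Lemma zeta2_order : zeta2 ^+ n2 = 1. Proof. by apply/eqP; rewrite zeta2_expr_eq1. Qed.

Lemma zeta1_neq1 : zeta1 != 1.
Proof. by rewrite -[zeta1]expr1 zeta1_expr_eq1 dvdn1 gtn_eqF ?prime_gt1. Qed.
Lemma zeta2_neq1 : zeta2 != 1.
Proof. by rewrite -[zeta2]expr1 zeta2_expr_eq1 dvdn1 gtn_eqF ?prime_gt1. Qed.

Lemma expr_beta_crt x : beta ^+ x = zeta1 ^+ (x %% n1) * zeta2 ^+ (x %% n2).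
Proof.
have cop := coprime_n1n2 W.
rewrite !expr_mod ?zeta1_order ?zeta2_order // -!exprM -exprD -mulnDl.
apply: expr_beta_mod; apply/eqP; rewrite chinese_remainder //; apply/andP; split.
  by rewrite -modnMml -modnDm chinese_modl // chinese_modl // mod0n addn0 modn_mod
    modnMml mul1n.
by rewrite -modnMml -modnDm chinese_modr // chinese_modr // mod0n add0n modn_mod
  modnMml mul1n.
Qed.

Lemma rho1_mod r r' : (r = r' %[mod n1.-1])%N -> rho1 r = rho1 r'.
Proof.
move=> rr'; rewrite /rho1 -(expr_mod _ zeta1_order) -[RHS](expr_mod _ zeta1_order).
by rewrite (prim_root_expn_mod n1_pr g1 r) (prim_root_expn_mod n1_pr g1 r') rr'.
Qed.

Lemma rho2_mod r r' : (r = r' %[mod n2.-1])%N -> rho2 r = rho2 r'.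
Proof.
move=> rr'; rewrite /rho2 -(expr_mod _ zeta2_order) -[RHS](expr_mod _ zeta2_order).
by rewrite (prim_root_expn_mod n2_pr g2 r) (prim_root_expn_mod n2_pr g2 r') rr'.
Qed.

Lemma expr_beta_rho x r t : (x = g ^ r %[mod n1])%N -> (x = g ^ t %[mod n2])%N ->
  beta ^+ x = rho1 r * rho2 t.
Proof.
by rewrite expr_beta_crt => -> ->; rewrite !expr_mod ?zeta1_order ?zeta2_order.
Qed.

Lemma rho_periodic m s : rho1 (s + e + m) * rho2 (s + e) = rho1 (s + m) * rho2 s.
Proof.
congr (_ * _).
  by apply: rho1_mod; rewrite addnAC /e (whe_eq_f2 W) -modnDmr modnMl addn0.
by apply: rho2_mod; rewrite /e (whe_eq_f1 W) -modnDmr modnMl addn0.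
Qed.

(* eta_m = sum_(y in D_m) beta^y, written in the CRT coordinates of [expr_beta_rho]. *)
Definition wh_period m := \sum_(s < e) rho1 (s + m) * rho2 s.

Lemma wh_period_add6 m : wh_period (m + 6) = wh_period m.
Proof.
have cop := coprime_f1f2 W.
(* Shifting s by c adds 6 to the exponent mod n1-1 and fixes it mod n2-1. *)
pose c := (6 * chinese ((n1 - 1) %/ 6) ((n2 - 1) %/ 6) 1 0)%N.
have c1 : (c = 6 %[mod n1.-1])%N.
  by rewrite (n1_pred_eq W) /c -muln_modr chinese_modl // muln_modr muln1.
have c2 : (c = 0 %[mod n2.-1])%N.
  by rewrite (n2_pred_eq W) /c -muln_modr chinese_modr // !mod0n muln0.
rewrite /wh_period -(big_ord_shift_periodic (F := fun s => rho1 (s + m)%N * rho2 s) c);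
  last exact: rho_periodic.
apply: eq_bigr => s _; congr (_ * _).
  by apply: rho1_mod; rewrite addnA [in RHS]addnAC -[in RHS]modnDmr c1 modnDmr.
by apply: rho2_mod; rewrite -[in RHS]modnDmr c2 mod0n addn0.
Qed.

Lemma sum_wh_period : \sum_(m < 6) wh_period m = 1.
Proof.
have n1p_gt0 : (0 < n1.-1)%N by rewrite (n1_pred_eq W) muln_gt0 (f1_gt0 W).
have n2p_gt0 : (0 < n2.-1)%N by rewrite (n2_pred_eq W) muln_gt0 (f2_gt0 W).
(* (m, s) |-> (s + m, s) is a bijection onto Z_(n1-1) x Z_(n2-1): the classes
   partition Z_n^*, so the six periods add up to the product of the orbit sums. *)
pose h (x : 'I_6 * 'I_e) : 'I_n1.-1 * 'I_n2.-1 :=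
  (Ordinal (ltn_pmod (x.2 + x.1) n1p_gt0), Ordinal (ltn_pmod x.2 n2p_gt0)).
have h_inj : injective h.
  move=> [m s] [m' t] [st1 st2].
  by have [/val_inj-> /val_inj->] := wh_index_inj W (ltn_ord s) (ltn_ord t)
    (ltn_ord m) (ltn_ord m') st1 st2.
have h_bij : bijective h.
  apply: (inj_card_bij h_inj).
  by rewrite !card_prod !card_ord /e (whe_eq_f1 W) (n1_pred_eq W) mulnA.
have sum_rho1 := sum_expr_prim_root_orbit n1_pr g1 zeta1_order zeta1_neq1.
have sum_rho2 := sum_expr_prim_root_orbit n2_pr g2 zeta2_order zeta2_neq1.
transitivity ((\sum_(r < n1.-1) rho1 r) * (\sum_(t < n2.-1) rho2 t)); last first.
  by rewrite sum_rho1 sum_rho2 mulrNN mulr1.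
rewrite /wh_period big_distrlr !pair_big /= [RHS](reindex h) /=; last exact: onW_bij.
apply: eq_bigr => -[m s] _ /=; congr (_ * _).
  exact/rho1_mod/esym/modn_mod.
exact/rho2_mod/esym/modn_mod.
Qed.

Lemma sum_whD_expr x k t j : (x = g ^ (t + k) %[mod n1])%N -> (x = g ^ t %[mod n2])%N ->
  \sum_(y <- whD n1 n2 g u j) beta ^+ (x * y)%N = wh_period (k + j).
Proof.
move=> x1 x2; rewrite big_map -[X in iota 0 X]subn0 big_mkord /wh_period.
rewrite -(big_ord_shift_periodic (F := fun s => rho1 (s + (k + j))%N * rho2 s) t);
  last exact: rho_periodic.
apply: eq_bigr => s _; apply: expr_beta_rho.
  by rewrite -modnMm x1 (whD_mod1 W) modnMm -expnD addnACA [(t + s)%N]addnC.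
by rewrite -modnMm x2 (whD_mod2 W) modnMm -expnD addnC.
Qed.

Lemma sum_whD_expr_n1 x j : (x %% n1 = 0)%N -> coprime x n2 ->
  \sum_(y <- whD n1 n2 g u j) beta ^+ (x * y)%N = - ((n1 - 1) %/ 6)%:R.
Proof.
move=> x1 cx; rewrite big_map -[X in iota 0 X]subn0 big_mkord (whe_eq_f1 W).
rewrite -(sum_expr_prim_root_orbit_shift n2_pr g2 (z := zeta2 ^+ x) _ 0); first last.
- by rewrite zeta2_expr_eq1 -prime_coprime // coprime_sym.
- by rewrite exprAC zeta2_order expr1n.
apply: eq_bigr => s _; rewrite expr_beta_crt addn0 -modnMm x1 mul0n mod0n expr0 mul1r.
by rewrite -modnMmr (whD_mod2 W) modnMmr expr_mod ?zeta2_order // exprM.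
Qed.

Lemma sum_whD_expr_n2 x j : (x %% n2 = 0)%N -> coprime x n1 ->
  \sum_(y <- whD n1 n2 g u j) beta ^+ (x * y)%N = - ((n2 - 1) %/ 6)%:R.
Proof.
move=> x2 cx; rewrite big_map -[X in iota 0 X]subn0 big_mkord (whe_eq_f2 W).
rewrite -(sum_expr_prim_root_orbit_shift n1_pr g1 (z := zeta1 ^+ x) _ j); first last.
- by rewrite zeta1_expr_eq1 -prime_coprime // coprime_sym.
- by rewrite exprAC zeta1_order expr1n.
apply: eq_bigr => s _; rewrite expr_beta_crt -[((x * _) %% n2)%N]modnMm x2 mul0n mod0n.
by rewrite expr0 mulr1 -modnMmr (whD_mod1 W) modnMmr expr_mod ?zeta1_order // exprM.
Qed.

Lemma sum_whN1_expr x : coprime x n2 -> \sum_(y <- whN1 n1 n2) beta ^+ (x * y)%N = -1.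
Proof.
move=> cx; rewrite big_map subn1 big_iota1.
under eq_bigr => i _ do rewrite mulnCA mulnC exprM.
apply: sum_expr_root1_nonzero_exps (prime_gt0 n2_pr) _ _.
  by rewrite -exprM -mulnA exprM exprAC (prim_expr_order beta_prim) expr1n.
rewrite -(prim_order_dvd beta_prim) [(x * _)%N]mulnC dvdn_pmul2l ?prime_gt0 //.
by rewrite -prime_coprime // coprime_sym.
Qed.

Lemma sum_whN1_expr_n2 x : (x %% n2 = 0)%N ->
  \sum_(y <- whN1 n1 n2) beta ^+ (x * y)%N = (n2.-1)%:R.
Proof.
move=> x2; rewrite big_map subn1 big_iota1.
rewrite (eq_bigr (fun _ => 1)) ?sumr_const ?card_ord // => i _.
rewrite (expr_beta_mod (y := 0)) ?expr0 //; apply/eqP.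
rewrite chinese_remainder ?(coprime_n1n2 W) // mod0n mulnA modnMl eqxx /=.
by rewrite -mulnA -modnMml x2.
Qed.

End WhitemanPeriods.

Section WhitemanWindows.
Variables (n1 n2 g u : nat) (K : fieldType) (L : fieldExtType K) (beta : L).
Hypotheses (W : whiteman_params n1 n2 g u) (beta_prim : (n1 * n2).-primitive_root beta).

Let D := whD n1 n2 g u.
Local Notation eta := (wh_period n1 n2 g beta).

Definition window_poly j : {poly K} :=
  setpoly K (n1 * n2) (fun i => [|| i \in whN1 n1 n2, i \in D j, i \in D j.+1 | i \in D j.+2]).

Definition window m : L := -1 + \sum_(i < 3) eta (i + m).

Lemma window_add3 m : window (m + 3) = - (window m + 1).
Proof.
have six : \sum_(i < 3) eta (i + m) + \sum_(i < 3) eta (i + (m + 3)) = 1.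
  rewrite -(sum_wh_period W beta_prim).
  rewrite -(big_ord_shift_periodic (F := eta) m (wh_period_add6 W beta_prim)).
  rewrite -[6%N]/(3 + 3)%N big_split_ord /=; congr (_ + _).
  by apply: eq_bigr => i _; congr eta; lia.
by rewrite /window -six; ring.
Qed.

Lemma window_add6 m : window (m + 6) = window m.
Proof.
by rewrite -[6%N]/(3 + 3)%N addnA !window_add3 opprD opprK addrK.
Qed.

Lemma evalL_window_poly j x : (j < 4)%N ->
  evalL (window_poly j) (beta ^+ x) = \sum_(y <- whN1 n1 n2) beta ^+ (x * y)%N +
    (\sum_(y <- D j) beta ^+ (x * y)%N + (\sum_(y <- D j.+1) beta ^+ (x * y)%N +
      \sum_(y <- D j.+2) beta ^+ (x * y)%N)).
Proof.
move=> j4; rewrite /evalL /window_poly /setpoly raddf_sum horner_sum.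
under eq_bigr => i _ do rewrite /= map_polyXn hornerXn -exprM.
rewrite (eq_bigl (fun i : 'I_(n1 * n2) => (i : nat) \in whN1 n1 n2 ++ D j ++ D j.+1 ++ D j.+2));
  last by move=> i; rewrite !mem_cat.
rewrite (big_ord_mem_uniq (fun i => beta ^+ (x * i)%N)) ?uniq_window // ?big_cat // => y.
by rewrite !mem_cat => /or4P[/(whN1_lt W)|/(whD_lt W)|/(whD_lt W)|/(whD_lt W)].
Qed.

Lemma evalL_window_expr j k t x : (j < 4)%N ->
  (x = g ^ (t + k) %[mod n1])%N -> (x = g ^ t %[mod n2])%N ->
  evalL (window_poly j) (beta ^+ x) = window (k + j).
Proof.
move=> j4 x1 x2; have cx : coprime x n2.
  by rewrite -coprime_modl x2 coprime_modl coprimeXl ?(prim_root_coprime (wh_prim_root2 W)).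
rewrite evalL_window_poly // (sum_whN1_expr W beta_prim cx).
rewrite !(sum_whD_expr W beta_prim _ x1 x2) /window !big_ord_recr big_ord0 /=.
by rewrite add0n add1n add2n !addnS add0r !addrA.
Qed.

Lemma evalL_windows_whD k a : a \in D k ->
  [/\ evalL (window_poly 0) (beta ^+ a) = window k,
      evalL (window_poly 1) (beta ^+ a) = window k.+1 &
      evalL (window_poly 2) (beta ^+ a) = window k.+2].
Proof.
case/memD => t _ ->; have E j : (j < 4)%N -> _ :=
  fun j4 => evalL_window_expr j4 (whD_mod1 W t k) (whD_mod2 W t k).
by rewrite !E // addn0 addn1 addn2.
Qed.

Lemma evalL_windows_beta :
  [/\ evalL (window_poly 0) beta = window 0, evalL (window_poly 1) beta = window 1 &
      evalL (window_poly 2) beta = window 2].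
Proof.
have E j : (j < 4)%N -> evalL (window_poly j) (beta ^+ 1) = window (0 + j) :=
  fun j4 => evalL_window_expr (t := 0) j4 (erefl _) (erefl _).
by rewrite -[beta]expr1 !E.
Qed.

Lemma evalL_window_whN1 j a : (j < 4)%N -> a \in whN1 n1 n2 ->
  evalL (window_poly j) (beta ^+ a) = - ((n1 + 1) %/ 2)%N%:R.
Proof.
move=> j4 /mapP[k]; rewrite mem_iota => /andP[k_gt0 k_lt] ->.
have n1_pr := wh_prime1 W; have n2_pr := wh_prime2 W.
have cop : coprime (k * n1) n2.
  rewrite coprimeMl (coprime_n1n2 W) andbT.
  by rewrite coprime_sym prime_coprime // gtnNdvd //; lia.
rewrite evalL_window_poly // (sum_whN1_expr W beta_prim cop).
rewrite !(sum_whD_expr_n1 W beta_prim _ (modnMl _ _) cop).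
have -> : ((n1 + 1) %/ 2 = 3 * ((n1 - 1) %/ 6) + 1)%N.
  have := n1_pred_eq W; have := prime_gt1 n1_pr => ? ?.
  by rewrite (_ : n1 + 1 = (3 * ((n1 - 1) %/ 6) + 1) * 2)%N ?mulnK //; lia.
by rewrite natrD natrM; ring.
Qed.

Lemma evalL_window_whN2 j a : (j < 4)%N -> a \in whN2 n1 n2 ->
  evalL (window_poly j) (beta ^+ a) = ((n2 - 1) %/ 2)%N%:R.
Proof.
move=> j4 /mapP[k]; rewrite mem_iota => /andP[k_gt0 k_lt] ->.
have n1_pr := wh_prime1 W; have n2_pr := wh_prime2 W.
have cop : coprime (k * n2) n1.
  rewrite coprimeMl [coprime n2 _]coprime_sym (coprime_n1n2 W) andbT.
  by rewrite coprime_sym prime_coprime // gtnNdvd //; lia.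
rewrite evalL_window_poly // (sum_whN1_expr_n2 W beta_prim (modnMl _ _)).
rewrite !(sum_whD_expr_n2 W beta_prim _ (modnMl _ _) cop).
have -> : ((n2 - 1) %/ 2 = 3 * ((n2 - 1) %/ 6))%N.
  have := n2_pred_eq W; have := prime_gt1 n2_pr => ? ?.
  by rewrite (_ : n2 - 1 = 3 * ((n2 - 1) %/ 6) * 2)%N ?mulnK //; lia.
by rewrite (n2_pred_eq W) !natrM; ring.
Qed.

End WhitemanWindows.

Theorem lemma4 (n1 n2 g u p q k : nat) (K : finFieldType) (L : fieldExtType K) (beta : L) :
  prime n1 -> prime n2 -> odd n1 -> odd n2 -> n1 != n2 ->
  gcdn (n1 - 1) (n2 - 1) = 6%N ->
  prim_root_mod n1 g -> prim_root_mod n2 g ->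
  (u = g %[mod n1])%N -> (u = 1 %[mod n2])%N ->
  prime p -> (0 < k)%N -> q = (p ^ k)%N -> #|K| = q -> coprime q (n1 * n2) ->
  (n1 * n2).-primitive_root beta ->
  let n := (n1 * n2)%N in
  let S := fun x : L => evalL (S_poly K n1 n2 g u) x in
  let T := fun x : L => evalL (T_poly K n1 n2 g u) x in
  let M := fun x : L => evalL (M_poly K n1 n2 g u) x in
  let D := whD n1 n2 g u in
  forall a : nat, (a < n)%N ->
  (a \in whN1 n1 n2 ->
        [/\ S (beta ^+ a) = - (((n1 + 1) %/ 2)%N%:R),
            T (beta ^+ a) = - (((n1 + 1) %/ 2)%N%:R) &
            M (beta ^+ a) = - (((n1 + 1) %/ 2)%N%:R)]) /\
      (a \in whN2 n1 n2 ->
        [/\ S (beta ^+ a) = ((n2 - 1) %/ 2)%N%:R,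
            T (beta ^+ a) = ((n2 - 1) %/ 2)%N%:R &
            M (beta ^+ a) = ((n2 - 1) %/ 2)%N%:R]) /\
      (a \in D 0%N ->
        [/\ S (beta ^+ a) = S beta, T (beta ^+ a) = T beta & M (beta ^+ a) = M beta]) /\
      (a \in D 1%N ->
        [/\ S (beta ^+ a) = T beta, T (beta ^+ a) = M beta
          & M (beta ^+ a) = - (S beta + 1)]) /\
      (a \in D 2%N ->
        [/\ S (beta ^+ a) = M beta, T (beta ^+ a) = - (S beta + 1)
          & M (beta ^+ a) = - (T beta + 1)]) /\
      (a \in D 3%N ->
        [/\ S (beta ^+ a) = - (S beta + 1), T (beta ^+ a) = - (T beta + 1)
          & M (beta ^+ a) = - (M beta + 1)]) /\
      (a \in D 4%N ->
        [/\ S (beta ^+ a) = - (T beta + 1), T (beta ^+ a) = - (M beta + 1)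
          & M (beta ^+ a) = S beta]) /\
      (a \in D 5%N ->
        [/\ S (beta ^+ a) = - (M beta + 1), T (beta ^+ a) = S beta
          & M (beta ^+ a) = T beta]).
Proof.
(* Oddness follows from the gcd condition, and the characteristic hypotheses are
   implied by the existence of beta. *)
move=> n1_pr n2_pr _ _ n1_neq_n2 gcd6 g1 g2 u1 u2 _ _ _ _ _ beta_prim n S T M D a _.
have W : whiteman_params n1 n2 g u by split.
rewrite {}/n {}/S {}/T {}/M {}/D.
rewrite -[S_poly _ _ _ _ _]/(window_poly n1 n2 g u K 0).
rewrite -[T_poly _ _ _ _ _]/(window_poly n1 n2 g u K 1).
rewrite -[M_poly _ _ _ _ _]/(window_poly n1 n2 g u K 2).
have [-> -> ->] := evalL_windows_beta W beta_prim.
pose w := window n1 n2 g beta.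
have w3 : w 3 = _ := window_add3 W beta_prim 0.
have w4 : w 4 = _ := window_add3 W beta_prim 1.
have w5 : w 5 = _ := window_add3 W beta_prim 2.
have w6 : w 6 = _ := window_add6 W beta_prim 0.
have w7 : w 7 = _ := window_add6 W beta_prim 1.
split; first by move=> aN1; split; apply: evalL_window_whN1.
split; first by move=> aN2; split; apply: evalL_window_whN2.
by do ![case/(evalL_windows_whD W beta_prim) => -> -> ->; rewrite ?w3 ?w4 ?w5 ?w6 ?w7
       | split].
Qed.
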